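(* Every ternary cubic form $F\in\mathbb{C}[x_0,x_1,x_2]_3$ has an apolar star configuration $\mathbb{X}(4)$.
   Context: Let $S=\mathbb{C}[x_0,x_1,x_2]$ and $T=\mathbb{C}[y_0,y_1,y_2]$, where $T$ acts on $S$ by differentiation, $y_j=\partial/\partial x_j$. For a form $F\in S$, $F^\perp=\{\partial\in T:\partial F=0\}$. A finite set of points $\mathbb{X}\subset\mathbb{P}^2=\mathbb{P}(S_1)$ with defining ideal $I(\mathbb{X})\subseteq T$ is apolar to $F$ if $I(\mathbb{X})\subseteq F^\perp$. A star configuration $\mathbb{X}(4)\subset\mathbb{P}^2$: take $4$ linear forms $l_1,\dots,l_4\in T_1$ such that any $3$ of them are linearly independent; $\mathbb{X}(4)$ is the set of $6$ pairwise intersection points of the lines $\{l_i=0\}$, with ideal $\bigcap_{1\le i<j\le 4}(l_i,l_j)$. *)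

From HB Require Import structures.
From mathcomp Require Import all_boot all_algebra.
From mathcomp Require Import reals complex.
From mathcomp Require Import mpoly.
Set Implicit Arguments. Unset Strict Implicit. Unset Printing Implicit Defensive.
Import GRing.Theory.
Local Open Scope ring_scope.

(* Both S = C[x0,x1,x2] and T = C[y0,y1,y2] are modelled as {mpoly C[3]}. *)

Definition diff_act (K : ringType) (g F : {mpoly K[3]}) : {mpoly K[3]} :=
  \sum_(m <- msupp g) g@_m *: mderivm m F.

Definition perp (K : ringType) (F : {mpoly K[3]}) : pred {mpoly K[3]} :=
  [pred g | diff_act g F == 0].

Definition any3_lin_indep (K : ringType) (l : 'I_4 -> {mpoly K[3]}) : Prop :=
  forall i j k : 'I_4, i != j -> i != k -> j != k ->
    forall a b c : K, a *: l i + b *: l j + c *: l k = 0 ->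
      [/\ a = 0, b = 0 & c = 0].

(* Membership in the ideal of the star configuration:
   \bigcap_{1 <= i < j <= 4} (l_i, l_j). *)
Definition in_star_ideal (K : ringType) (l : 'I_4 -> {mpoly K[3]})
    (g : {mpoly K[3]}) : Prop :=
  forall i j : 'I_4, (i < j)%N ->
    exists a b : {mpoly K[3]}, g = a * l i + b * l j.

Definition star_apolar (K : ringType) (l : 'I_4 -> {mpoly K[3]})
    (F : {mpoly K[3]}) : Prop :=
  forall g, in_star_ideal l g -> g \in perp F.

(* Write the cubic as [F(x) = Phi(x, x, x)], [Phi] its polar trilinear form, and call a
   basis [v1, v2, v3] a star basis when [Phi(v1, v2, v3) = 0] and
   [Phi(vi, vi, vj) + Phi(vi, vj, vj) = 0] for [i < j]. In the coordinates [W1, W2, W3]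
   dual to a star basis, [det^3 F] is a combination of [W1^3], [W2^3], [W3^3],
   [(W1 - W2)^3], [(W1 - W3)^3] and [(W2 - W3)^3]: the cubes of the linear forms of the six
   vertices of the star configuration cut out by the lines [v1], [v2], [v3], [v1 + v2 + v3].
   A cube [L_p^3] is annihilated by the ideal [(l_i, l_j)] of any two lines through [p],
   hence the configuration is apolar to [F].
   Over an algebraically closed field of characteristic 0 every cubic has a star basis.
   If [Phi(v1, v2, -) = 0] for independent [v1, v2], two quadratic equations complete them
   to one. Such a pair is a root of the Hessian together with its kernel vector when [F] is
   smooth; otherwise [F] is normalized at a singular point according to its tangent cone
   (a vertex, a node or a double line). *)

From HB Require Import structures.
From mathcomp Require Import all_boot all_algebra.
From mathcomp Require Import reals complex.
From mathcomp Require Import mpoly.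
From mathcomp.multinomials Require Import ssrcomplements.
From mathcomp Require Import ring zify.
From Stdlib Require Import Classical.
Set Implicit Arguments. Unset Strict Implicit. Unset Printing Implicit Defensive.
Import GRing.Theory Num.Theory.
Local Open Scope ring_scope.

Section Coordinates.
Variable K : comNzRingType.

Record vec := Vec { x0 : K; x1 : K; x2 : K }.

(* [c_ijk a] is the value of the polar form on the basis vectors e_i, e_j, e_k;
   the cubic itself is [polar a x x x]. *)
Record cubic := Cubic { c000 : K; c001 : K; c002 : K; c011 : K; c012 : K;
  c022 : K; c111 : K; c112 : K; c122 : K; c222 : K }.

Definition polar (a : cubic) (u v w : vec) : K :=
  c000 a * x0 u * x0 v * x0 w +
  c001 a * x0 u * x0 v * x1 w +
  c002 a * x0 u * x0 v * x2 w +
  c001 a * x0 u * x1 v * x0 w +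
  c011 a * x0 u * x1 v * x1 w +
  c012 a * x0 u * x1 v * x2 w +
  c002 a * x0 u * x2 v * x0 w +
  c012 a * x0 u * x2 v * x1 w +
  c022 a * x0 u * x2 v * x2 w +
  c001 a * x1 u * x0 v * x0 w +
  c011 a * x1 u * x0 v * x1 w +
  c012 a * x1 u * x0 v * x2 w +
  c011 a * x1 u * x1 v * x0 w +
  c111 a * x1 u * x1 v * x1 w +
  c112 a * x1 u * x1 v * x2 w +
  c012 a * x1 u * x2 v * x0 w +
  c112 a * x1 u * x2 v * x1 w +
  c122 a * x1 u * x2 v * x2 w +
  c002 a * x2 u * x0 v * x0 w +
  c012 a * x2 u * x0 v * x1 w +
  c022 a * x2 u * x0 v * x2 w +
  c012 a * x2 u * x1 v * x0 w +
  c112 a * x2 u * x1 v * x1 w +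
  c122 a * x2 u * x1 v * x2 w +
  c022 a * x2 u * x2 v * x0 w +
  c122 a * x2 u * x2 v * x1 w +
  c222 a * x2 u * x2 v * x2 w.

Definition det3 (u v w : vec) : K :=
  x0 u * (x1 v * x2 w - x2 v * x1 w) - x1 u * (x0 v * x2 w - x2 v * x0 w)
  + x2 u * (x0 v * x1 w - x1 v * x0 w).

Definition dot (u v : vec) : K := x0 u * x0 v + x1 u * x1 v + x2 u * x2 v.

Definition cross (u v : vec) : vec :=
  Vec (x1 u * x2 v - x2 u * x1 v) (x2 u * x0 v - x0 u * x2 v)
      (x0 u * x1 v - x1 u * x0 v).

Definition vscale (c : K) (u : vec) : vec := Vec (c * x0 u) (c * x1 u) (c * x2 u).

Definition lincomb3 (c1 c2 c3 : K) (p q r : vec) : vec :=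
  Vec (c1 * x0 p + c2 * x0 q + c3 * x0 r) (c1 * x1 p + c2 * x1 q + c3 * x1 r)
      (c1 * x2 p + c2 * x2 q + c3 * x2 r).

Definition e0 : vec := Vec 1 0 0.
Definition e1 : vec := Vec 0 1 0.
Definition e2 : vec := Vec 0 0 1.

Definition nonzero (p : vec) : bool := [|| x0 p != 0, x1 p != 0 | x2 p != 0].

Lemma nonzeroPn p : ~~ nonzero p -> p = Vec 0 0 0.
Proof.
by case: p => p0 p1 p2; rewrite /nonzero /= !negb_or !negbK => /and3P[/eqP-> /eqP-> /eqP->].
Qed.

Lemma polar_sym12 a u v w : polar a u v w = polar a v u w.
Proof. rewrite /polar; ring. Qed.

Lemma polar_sym23 a u v w : polar a u v w = polar a u w v.
Proof. rewrite /polar; ring. Qed.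

Lemma polar_sym13 a u v w : polar a u v w = polar a w v u.
Proof. rewrite /polar; ring. Qed.

Lemma polar_scalel a c u v w : polar a (vscale c u) v w = c * polar a u v w.
Proof. rewrite /polar /=; ring. Qed.

Lemma polar_scaler a u v c w : polar a u v (vscale c w) = c * polar a u v w.
Proof. rewrite /polar /=; ring. Qed.

Lemma polar_lincomb3r a u v c1 c2 c3 p q r :
  polar a u v (lincomb3 c1 c2 c3 p q r) =
  c1 * polar a u v p + c2 * polar a u v q + c3 * polar a u v r.
Proof. rewrite /polar /=; ring. Qed.

Lemma dot_cross u v w : dot w (cross u v) = det3 u v w.
Proof. rewrite /dot /det3 /=; ring. Qed.

Lemma dot_lincomb3_cross c1 c2 c3 p q r :
  [/\ dot (lincomb3 c1 c2 c3 p q r) (cross q r) = c1 * det3 p q r,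
      dot (lincomb3 c1 c2 c3 p q r) (cross r p) = c2 * det3 p q r
    & dot (lincomb3 c1 c2 c3 p q r) (cross p q) = c3 * det3 p q r].
Proof. by split; rewrite /dot /det3 /=; ring. Qed.

(* Cramer's rule. *)
Lemma lincomb3_cross p q r x :
  lincomb3 (dot (cross q r) x) (dot (cross r p) x) (dot (cross p q) x) p q r =
  vscale (det3 p q r) x.
Proof. rewrite /lincomb3 /vscale /dot /cross /det3 /=; congr Vec; ring. Qed.

Lemma cross_eq0C u v : cross u v = Vec 0 0 0 -> cross v u = Vec 0 0 0.
Proof.
move=> uv0; transitivity (vscale (-1) (cross u v)).
  by rewrite /vscale /cross /=; congr Vec; ring.
by rewrite uv0 /vscale /= mulr0.
Qed.

Definition cubic_in_basis (a : cubic) (b1 b2 b3 : vec) : cubic :=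
  Cubic (polar a b1 b1 b1) (polar a b1 b1 b2) (polar a b1 b1 b3) (polar a b1 b2 b2)
    (polar a b1 b2 b3) (polar a b1 b3 b3) (polar a b2 b2 b2) (polar a b2 b2 b3)
    (polar a b2 b3 b3) (polar a b3 b3 b3).

Definition in_basis (b1 b2 b3 u : vec) : vec := lincomb3 (x0 u) (x1 u) (x2 u) b1 b2 b3.

Lemma polar_in_basis a b1 b2 b3 u v w :
  polar (cubic_in_basis a b1 b2 b3) u v w =
  polar a (in_basis b1 b2 b3 u) (in_basis b1 b2 b3 v) (in_basis b1 b2 b3 w).
Proof. rewrite /cubic_in_basis /polar /in_basis /=; ring. Qed.

Lemma det3_in_basis b1 b2 b3 u v w :
  det3 (in_basis b1 b2 b3 u) (in_basis b1 b2 b3 v) (in_basis b1 b2 b3 w) =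
  det3 b1 b2 b3 * det3 u v w.
Proof. rewrite /det3 /in_basis /=; ring. Qed.

Lemma polar_lincomb3 a c1 c2 c3 v1 v2 v3 :
  let x := lincomb3 c1 c2 c3 v1 v2 v3 in
  polar a x x x =
  c1 ^+ 3 * polar a v1 v1 v1 + c2 ^+ 3 * polar a v2 v2 v2 + c3 ^+ 3 * polar a v3 v3 v3
  + 3%:R * (c1 ^+ 2 * c2) * polar a v1 v1 v2 + 3%:R * (c1 ^+ 2 * c3) * polar a v1 v1 v3
  + 3%:R * (c1 * c2 ^+ 2) * polar a v1 v2 v2 + 3%:R * (c2 ^+ 2 * c3) * polar a v2 v2 v3
  + 3%:R * (c1 * c3 ^+ 2) * polar a v1 v3 v3 + 3%:R * (c2 * c3 ^+ 2) * polar a v2 v3 v3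
  + 6%:R * (c1 * c2 * c3) * polar a v1 v2 v3.
Proof. rewrite /polar /lincomb3 /=; ring. Qed.

(* [W1, W2, W3] are [det3 v1 v2 v3] times the coordinates of [x] in the basis [v1, v2, v3]. *)
Lemma polar_star_expansion a v1 v2 v3 x :
  let W1 := dot (cross v2 v3) x in let W2 := dot (cross v3 v1) x in
  let W3 := dot (cross v1 v2) x in
  det3 v1 v2 v3 ^+ 3 * polar a x x x =
  (polar a v1 v1 v1 + polar a v1 v1 v2 + polar a v1 v1 v3) * W1 ^+ 3
  + (polar a v2 v2 v2 - polar a v1 v1 v2 + polar a v2 v2 v3) * W2 ^+ 3
  + (polar a v3 v3 v3 - polar a v1 v1 v3 - polar a v2 v2 v3) * W3 ^+ 3
  - polar a v1 v1 v2 * (W1 - W2) ^+ 3 - polar a v1 v1 v3 * (W1 - W3) ^+ 3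
  - polar a v2 v2 v3 * (W2 - W3) ^+ 3
  + 6%:R * polar a v1 v2 v3 * (W1 * W2 * W3)
  + 3%:R * (polar a v1 v1 v2 + polar a v1 v2 v2) * (W1 * W2 ^+ 2)
  + 3%:R * (polar a v1 v1 v3 + polar a v1 v3 v3) * (W1 * W3 ^+ 2)
  + 3%:R * (polar a v2 v2 v3 + polar a v2 v3 v3) * (W2 * W3 ^+ 2).
Proof.
move=> W1 W2 W3.
have -> : det3 v1 v2 v3 ^+ 3 * polar a x x x =
    polar a (vscale (det3 v1 v2 v3) x) (vscale (det3 v1 v2 v3) x)
      (vscale (det3 v1 v2 v3) x).
  by rewrite /polar /vscale /=; ring.
rewrite -lincomb3_cross polar_lincomb3 -/W1 -/W2 -/W3.
move: (polar a v1 v1 v1) (polar a v1 v1 v2) (polar a v1 v1 v3) (polar a v1 v2 v2)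
  (polar a v1 v2 v3) (polar a v1 v3 v3) (polar a v2 v2 v2) (polar a v2 v2 v3)
  (polar a v2 v3 v3) (polar a v3 v3 v3) => *.
ring.
Qed.

End Coordinates.

Arguments e0 {K}.
Arguments e1 {K}.
Arguments e2 {K}.

Section StarBasis.
Variable K : numClosedFieldType.
Local Notation vec := (vec K).
Local Notation cubic := (cubic K).
Implicit Types (u v w p q r : vec) (a : cubic).

Definition star_basis a : Prop :=
  exists u v w, [/\ det3 u v w != 0, polar a u v w = 0,
    polar a u u v + polar a u v v = 0, polar a u u w + polar a u w w = 0
    & polar a v v w + polar a v w w = 0].

Definition singular a p : Prop := forall x, polar a p p x = 0.

Definition vertex a p : Prop := forall x y, polar a p x y = 0.

Lemma quadratic_root (A B C : K) : A != 0 \/ B != 0 \/ C = 0 ->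
  exists x, A * x ^+ 2 + B * x + C = 0.
Proof.
have [->|nzA _] := eqVneq A 0; last first.
  have [x hx] := @solve_monicpoly K 2 (fun i => if i == 0%N then - C / A else - B / A) isT.
  exists x; move: hx; rewrite !big_ord_recr big_ord0 /= add0r expr0 expr1 mulr1 => ->.
  by field.
case=> [/eqP//|[nzB|->]]; last by exists 0; rewrite expr0n /= !mulr0 !addr0.
by exists (- C / B); rewrite mul0r add0r; field.
Qed.

Lemma shifted_quadratic_root (f g h : K) : f != 0 \/ g != 0 \/ h = 0 ->
  exists x, f * x ^+ 2 + (f + 2 * g) * x + (g + h) = 0.
Proof.
move=> nondeg; apply: quadratic_root.
have [f0|] := eqVneq f 0; last by left.
have [g0|ng] := eqVneq g 0; last by right; left; rewrite f0 add0r mulf_neq0 // pnatr_eq0.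
move: nondeg; rewrite f0 g0 => -[/eqP//|[/eqP//|->]].
by right; right; rewrite addr0.
Qed.

Lemma linear_root (c d : K) : d != 0 -> exists x, c + x * d = 0.
Proof. by move=> nz_d; exists (- c / d); field. Qed.

(* The third vector is [w + x v1 + y v2]; the two conditions left to satisfy are
   quadratic equations in [x] alone and in [y] alone. *)
Lemma star_basis_of_conjugates a v1 v2 w :
  polar a v1 v2 v1 = 0 -> polar a v1 v2 v2 = 0 -> polar a v1 v2 w = 0 ->
  det3 v1 v2 w != 0 ->
  polar a v1 v1 v1 != 0 \/ polar a v1 v1 w != 0 \/ polar a v1 w w = 0 ->
  polar a v2 v2 v2 != 0 \/ polar a v2 v2 w != 0 \/ polar a v2 w w = 0 ->
  star_basis a.
Proof.
move=> h121 h122 h12w hD nondeg1 nondeg2.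
have [x hx] := shifted_quadratic_root nondeg1.
have [y hy] := shifted_quadratic_root nondeg2.
exists v1, v2, (lincomb3 x y 1 v1 v2 w); split.
- suff -> : det3 v1 v2 (lincomb3 x y 1 v1 v2 w) = det3 v1 v2 w by [].
  rewrite /det3 /lincomb3 /=; ring.
- by rewrite polar_lincomb3r h121 h122 h12w; ring.
- by rewrite (polar_sym13 a v1 v1 v2) polar_sym12 h121 h122 addr0.
- have -> : polar a v1 v1 (lincomb3 x y 1 v1 v2 w) +
            polar a v1 (lincomb3 x y 1 v1 v2 w) (lincomb3 x y 1 v1 v2 w) =
     (polar a v1 v1 v1 * x ^+ 2 + (polar a v1 v1 v1 + 2 * polar a v1 v1 w) * x
      + (polar a v1 v1 w + polar a v1 w w)) + (y + 2 * x * y) * polar a v1 v2 v1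
      + y ^+ 2 * polar a v1 v2 v2 + 2 * y * polar a v1 v2 w.
    by rewrite /polar /lincomb3 /=; ring.
  by rewrite hx h121 h122 h12w; ring.
- have -> : polar a v2 v2 (lincomb3 x y 1 v1 v2 w) +
            polar a v2 (lincomb3 x y 1 v1 v2 w) (lincomb3 x y 1 v1 v2 w) =
     (polar a v2 v2 v2 * y ^+ 2 + (polar a v2 v2 v2 + 2 * polar a v2 v2 w) * y
      + (polar a v2 v2 w + polar a v2 w w)) + (x + 2 * x * y) * polar a v1 v2 v2
      + x ^+ 2 * polar a v1 v2 v1 + 2 * x * polar a v1 v2 w.
    by rewrite /polar /lincomb3 /=; ring.
  by rewrite hy h121 h122 h12w; ring.
Qed.

Lemma polar_eq0_on_basis a u v p q r : det3 p q r != 0 ->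
  polar a u v p = 0 -> polar a u v q = 0 -> polar a u v r = 0 ->
  forall x, polar a u v x = 0.
Proof.
move=> hD hp hq hr x.
have : det3 p q r * polar a u v x = 0.
  by rewrite -polar_scaler -lincomb3_cross polar_lincomb3r hp hq hr !mulr0 !addr0.
by move/eqP; rewrite mulf_eq0 (negbTE hD) => /eqP.
Qed.

Lemma nonsingular_cases a u v w : det3 u v w != 0 -> polar a u u v = 0 ->
  ~ singular a u -> polar a u u u != 0 \/ polar a u u w != 0 \/ polar a u w w = 0.
Proof.
move=> hD huv nsing.
have [huu|] := eqVneq (polar a u u u) 0; last by left.
have [huw|] := eqVneq (polar a u u w) 0; last by right; left.
by exfalso; apply: nsing; apply: (polar_eq0_on_basis hD).
Qed.

Lemma det3_neq0_or_parallel u p : nonzero p ->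
  (exists w, det3 u p w != 0) \/ exists c, u = vscale c p.
Proof.
move=> np; case: (classic (exists w, det3 u p w != 0)) => [|no_w]; first by left.
right.
have det0 w : det3 u p w = 0 by apply/eqP/negPn/negP => nz; apply: no_w; exists w.
have [c12 c20 c01] : [/\ x1 u * x2 p = x2 u * x1 p, x2 u * x0 p = x0 u * x2 p
                      & x0 u * x1 p = x1 u * x0 p].
  split; apply/eqP; rewrite -subr_eq0;
    [rewrite -(det0 e0) | rewrite -(det0 e1) | rewrite -(det0 e2)];
    by apply/eqP; rewrite /det3 /=; ring.
have ratio (s t m d : K) : d != 0 -> s * d = m * t -> s = m / d * t.
  by move=> nd h; rewrite mulrAC -h mulfK.
rewrite /vscale; case: u c12 c20 c01 {det0 no_w} => u0 u1 u2 /= c12 c20 c01.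
case/or3P: np => np.
- by exists (u0 / x0 p); congr Vec; apply: ratio np _; rewrite // c01.
- by exists (u1 / x1 p); congr Vec; apply: ratio np _; rewrite // -c12.
- by exists (u2 / x2 p); congr Vec; apply: ratio np _; rewrite // -c20.
Qed.

Lemma polar_eq0 a : (forall u, singular a u) -> forall u v w, polar a u v w = 0.
Proof.
move=> sing u v w.
have : 2 * polar a u v w =
    polar a (lincomb3 1 1 0 u v u) (lincomb3 1 1 0 u v u) w - polar a u u w - polar a v v w.
  by rewrite /polar /lincomb3 /=; ring.
by rewrite !sing !subr0 => /eqP; rewrite mulf_eq0 pnatr_eq0 => /eqP.
Qed.

Lemma det3_e012 : det3 e0 e1 e2 = 1 :> K.
Proof. rewrite /det3 /=; ring. Qed.

Lemma star_basis_of_zero a : (forall u v w, polar a u v w = 0) -> star_basis a.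
Proof.
by move=> a0; exists e0, e1, e2; rewrite !a0 addr0 det3_e012 oner_neq0.
Qed.

Lemma star_basis_of_vertex a p : nonzero p -> vertex a p -> star_basis a.
Proof.
move=> np hp.
case: (classic (forall u, singular a u)) => [all_sing|/not_all_ex_not[u hu]].
  exact/star_basis_of_zero/polar_eq0.
have [[t ht]|[c uE]] := det3_neq0_or_parallel u np.
  apply: (star_basis_of_conjugates (v1 := u) (v2 := p) (w := t)) => //;
    rewrite ?(polar_sym12 a u p) ?hp //.
  - by apply: nonsingular_cases ht _ hu; rewrite polar_sym13 hp.
  - by right; right.
by case: hu => x; rewrite uE polar_scalel hp mulr0.
Qed.

Lemma star_basis_in_basis a b1 b2 b3 : det3 b1 b2 b3 != 0 ->
  star_basis (cubic_in_basis a b1 b2 b3) -> star_basis a.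
Proof.
move=> hb [u [v [w [hD E0 E1 E2 E3]]]].
exists (in_basis b1 b2 b3 u), (in_basis b1 b2 b3 v), (in_basis b1 b2 b3 w).
by rewrite -!polar_in_basis det3_in_basis mulf_neq0.
Qed.

Section SingularAtE0.
Variable a : cubic.
Hypotheses (h000 : c000 a = 0) (h001 : c001 a = 0) (h002 : c002 a = 0).

Lemma polar_e0e0 v : polar a v e0 e0 = 0.
Proof. by rewrite /polar /= h000 h001 h002; ring. Qed.

Lemma star_basis_node : c011 a * c022 a - c012 a ^+ 2 != 0 -> star_basis a.
Proof.
set q11 := c011 a; set q12 := c012 a; set q22 := c022 a => hdet.
pose Q t := q11 + 2 * q12 * t + q22 * t ^+ 2.
have [t ht] : exists t, Q t != 0.
  (* a quadratic form vanishing at (1, 0), (1, 1), (1, -1) is degenerate *)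
  have key : 16 * (q11 * q22 - q12 ^+ 2) =
    8 * Q 0 * (Q 1 + Q (-1)) - 16 * Q 0 ^+ 2 - (Q 1 - Q (-1)) ^+ 2.
    by rewrite /Q; ring.
  have [z0|] := eqVneq (Q 0) 0; last by exists 0.
  have [z1|] := eqVneq (Q 1) 0; last by exists 1.
  have [zm|] := eqVneq (Q (-1)) 0; last by exists (-1).
  move: key; rewrite z0 z1 zm subrr addr0 expr0n /= !mulr0 !subr0.
  by move/eqP; rewrite mulf_eq0 pnatr_eq0 (negbTE hdet).
pose A := - (q12 + q22 * t); pose B := q11 + q12 * t.
have hn2 : Q t * (q11 * q22 - q12 ^+ 2) != 0 by rewrite mulf_neq0.
have [x2 hx2] := linear_root (polar a (Vec 0 1 t) (Vec 0 1 t) (Vec 0 A B)) ht.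
have [x1 hx1] := linear_root (polar a (Vec 0 1 t) (Vec 0 A B) (Vec 0 A B)) hn2.
apply: (star_basis_of_conjugates (v1 := Vec x1 1 t) (v2 := Vec x2 A B) (w := e0)).
- rewrite -[RHS]hx2 /polar /Q /A /B /q11 /q12 /q22 /= h000 h001 h002; ring.
- rewrite -[RHS]hx1 /polar /Q /A /B /q11 /q12 /q22 /= h000 h001 h002; ring.
- rewrite /polar /A /B /q11 /q12 /q22 /= h000 h001 h002; ring.
- rewrite (_ : det3 _ _ _ = Q t) // /det3 /Q /A /B /=; ring.
- by right; right; rewrite polar_e0e0.
- by right; right; rewrite polar_e0e0.
Qed.

Lemma star_basis_double_tangent_root t : c012 a = 0 -> c022 a = 0 -> c011 a != 0 ->
  c122 a + t * c222 a = 0 -> star_basis a.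
Proof.
move=> h012 h022 h011 ht.
have [x2 hx2] := linear_root (polar a (Vec 0 1 t) (Vec 0 1 t) (Vec 0 0 1)) h011.
apply: (star_basis_of_conjugates (v1 := Vec 0 1 t) (v2 := Vec x2 0 1) (w := e0)).
- rewrite -[RHS]hx2 /polar /= h000 h001 h002 h012 h022; ring.
- rewrite -[RHS]ht /polar /= h000 h001 h002 h012 h022; ring.
- rewrite /polar /= h000 h001 h002 h012 h022; ring.
- rewrite (_ : det3 _ _ _ = 1) ?oner_neq0 // /det3 /=; ring.
- by right; right; rewrite polar_e0e0.
- by right; right; rewrite polar_e0e0.
Qed.

End SingularAtE0.

Lemma star_basis_double_tangent_normal a :
  c000 a = 0 -> c001 a = 0 -> c002 a = 0 -> c012 a = 0 -> c022 a = 0 ->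
  c111 a = 0 -> c112 a = 0 -> c222 a = 0 -> c011 a != 0 -> c122 a != 0 ->
  star_basis a.
Proof.
move=> h000 h001 h002 h012 h022 h111 h112 h222 h011 h122.
pose y := sqrtC (2^-1 : K); pose x := c122 a * y / c011 a.
have y2 : 2 * y ^+ 2 = 1 by rewrite sqrtCK mulfV ?pnatr_eq0.
have y0 : y != 0 by apply: contra_eq_neq y2 => ->; rewrite expr0n /= mulr0 eq_sym oner_eq0.
have hx : c011 a * x = c122 a * y by rewrite /x; field.
exists (Vec 0 1 1), (Vec x y (-1)), (Vec 0 (-1) 1); split.
- rewrite (_ : det3 _ _ _ = - 2 * x); last by rewrite /det3 /=; ring.
  by rewrite /x !mulf_neq0 ?invr_eq0 ?oppr_eq0 ?pnatr_eq0.
- transitivity (c122 a * y - c011 a * x); last by rewrite hx subrr.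
  rewrite /polar /= h000 h001 h002 h012 h022 h111 h112 h222; ring.
- transitivity ((c011 a * x - c122 a * y) + (2 * (c011 a * x) * y - c122 a)).
    rewrite /polar /= h000 h001 h002 h012 h022 h111 h112 h222; ring.
  rewrite hx subrr add0r (_ : _ - _ = c122 a * (2 * y ^+ 2 - 1)); last by ring.
  by rewrite y2 subrr mulr0.
- rewrite /polar /= h000 h001 h002 h012 h022 h111 h112 h222; ring.
- transitivity ((c011 a * x - c122 a * y) - (2 * (c011 a * x) * y - c122 a)).
    rewrite /polar /= h000 h001 h002 h012 h022 h111 h112 h222; ring.
  rewrite hx subrr add0r (_ : _ - _ = c122 a * (2 * y ^+ 2 - 1)); last by ring.
  by rewrite y2 subrr mulr0 oppr0.
Qed.

Lemma star_basis_double_tangent_y2 a : c000 a = 0 -> c001 a = 0 -> c002 a = 0 ->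
  c012 a = 0 -> c022 a = 0 -> c011 a != 0 -> star_basis a.
Proof.
move=> h000 h001 h002 h012 h022 h011.
have [z222|nz222] := eqVneq (c222 a) 0; last first.
  apply: (star_basis_double_tangent_root h000 h001 h002 (t := - c122 a / c222 a)) => //.
  by field.
have [z122|nz122] := eqVneq (c122 a) 0.
  apply: (star_basis_double_tangent_root h000 h001 h002 (t := 0)) => //.
  by rewrite z122 z222; ring.
pose al := c111 a / (3 * c011 a); pose be := c112 a / c011 a.
apply: (star_basis_in_basis (b1 := e0) (b2 := Vec (- al) 1 0) (b3 := Vec (- be) 0 1)).
  by rewrite (_ : det3 _ _ _ = 1) ?oner_neq0 // /det3 /=; ring.
have h3 : 3 * c011 a != 0 by rewrite mulf_neq0 ?pnatr_eq0.
apply: star_basis_double_tangent_normal;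
  rewrite /cubic_in_basis /polar /= ?h000 ?h001 ?h002 ?h012 ?h022 ?z222 /al /be.
- ring.
- ring.
- ring.
- ring.
- ring.
- by field.
- by field.
- ring.
- by rewrite (_ : _ + _ = c011 a) //; ring.
- by rewrite (_ : _ + _ = c122 a) //; ring.
Qed.

Lemma star_basis_double_tangent_y a : c000 a = 0 -> c001 a = 0 -> c002 a = 0 ->
  c011 a != 0 -> c011 a * c022 a = c012 a ^+ 2 -> star_basis a.
Proof.
move=> h000 h001 h002 h011 hdisc.
apply: (star_basis_in_basis (b1 := e0) (b2 := e1) (b3 := Vec 0 (- c012 a) (c011 a))).
  by rewrite (_ : det3 _ _ _ = c011 a) // /det3 /=; ring.
apply: star_basis_double_tangent_y2; rewrite /cubic_in_basis /polar /= ?h000 ?h001 ?h002.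
- ring.
- ring.
- ring.
- ring.
- rewrite (_ : _ + _ = c011 a * (c011 a * c022 a - c012 a ^+ 2)); last by ring.
  by rewrite hdisc subrr mulr0.
- by rewrite (_ : _ + _ = c011 a) //; ring.
Qed.

Lemma star_basis_double_tangent a : c000 a = 0 -> c001 a = 0 -> c002 a = 0 ->
  ~ [/\ c011 a = 0, c012 a = 0 & c022 a = 0] ->
  c011 a * c022 a = c012 a ^+ 2 -> star_basis a.
Proof.
move=> h000 h001 h002 tangent_cone hdisc.
have [z11|nz11] := eqVneq (c011 a) 0; last exact: star_basis_double_tangent_y.
have z12 : c012 a = 0.
  by apply/eqP; rewrite -sqrf_eq0 -hdisc z11 mul0r.
have nz22 : c022 a != 0 by apply/eqP => z22; apply: tangent_cone.
apply: (star_basis_in_basis (b1 := e0) (b2 := e2) (b3 := e1)).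
  by rewrite (_ : det3 _ _ _ = -1) ?oppr_eq0 ?oner_neq0 // /det3 /=; ring.
apply: star_basis_double_tangent_y; rewrite /cubic_in_basis /polar /= ?h000 ?h001 ?h002 ?z11 ?z12.
- ring.
- ring.
- ring.
- by rewrite (_ : _ + _ = c022 a) //; ring.
- ring.
Qed.

Lemma star_basis_singular_e0 a : c000 a = 0 -> c001 a = 0 -> c002 a = 0 -> star_basis a.
Proof.
move=> h000 h001 h002.
case: (classic [/\ c011 a = 0, c012 a = 0 & c022 a = 0]) => [[z11 z12 z22]|tangent_cone].
  apply: (star_basis_of_vertex (p := e0)); first by rewrite /nonzero /= oner_neq0.
  by move=> x y; rewrite /polar /= h000 h001 h002 z11 z12 z22; ring.
have [hdisc|hdisc] := eqVneq (c011 a * c022 a - c012 a ^+ 2) 0.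
  by apply: star_basis_double_tangent => //; apply/eqP; rewrite -subr_eq0 hdisc.
exact: star_basis_node.
Qed.

Lemma star_basis_of_singular a p : nonzero p -> singular a p -> star_basis a.
Proof.
move=> np hp.
have completed b2 b3 : det3 p b2 b3 != 0 -> star_basis a.
  by move=> hD; apply: (star_basis_in_basis hD); apply: star_basis_singular_e0; apply: hp.
case/or3P: np => np.
- by apply: (completed e1 e2); rewrite (_ : det3 _ _ _ = x0 p) // /det3 /=; ring.
- by apply: (completed e0 e2); rewrite (_ : det3 _ _ _ = - x1 p) ?oppr_eq0 // /det3 /=; ring.
- by apply: (completed e0 e1); rewrite (_ : det3 _ _ _ = x2 p) // /det3 /=; ring.
Qed.

Lemma orth_of_parallel r s t : nonzero r ->
  cross s r = Vec 0 0 0 -> cross t r = Vec 0 0 0 ->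
  exists2 q, nonzero q & [/\ dot r q = 0, dot s q = 0 & dot t q = 0].
Proof.
move=> nr sr tr.
have [n12|] := boolP ((x1 r != 0) || (x2 r != 0)).
  exists (Vec 0 (x2 r) (- x1 r)); first by rewrite /nonzero /= oppr_eq0 eqxx /= orbC.
  split; first by rewrite /dot /=; ring.
  - by transitivity (x0 (cross s r)); [rewrite /dot /cross /=; ring | rewrite sr].
  - by transitivity (x0 (cross t r)); [rewrite /dot /cross /=; ring | rewrite tr].
rewrite negb_or !negbK => /andP[/eqP r1 /eqP r2].
have n0 : x0 r != 0 by move: nr; rewrite /nonzero r1 r2 eqxx orbF.
exists (Vec (- x2 r) 0 (x0 r)); first by rewrite /nonzero /= n0 !orbT.
split; first by rewrite /dot /=; ring.
- by transitivity (x1 (cross s r)); [rewrite /dot /cross /=; ring | rewrite sr].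
- by transitivity (x1 (cross t r)); [rewrite /dot /cross /=; ring | rewrite tr].
Qed.

Lemma det3_eq0_kernel r0 r1 r2 : det3 r0 r1 r2 = 0 ->
  exists2 q, nonzero q & [/\ dot r0 q = 0, dot r1 q = 0 & dot r2 q = 0].
Proof.
move=> hD.
have [n01|/nonzeroPn z01] := boolP (nonzero (cross r0 r1)).
  exists (cross r0 r1); rewrite // !dot_cross.
  by split; rewrite ?hD // /det3; ring.
have [n12|/nonzeroPn z12] := boolP (nonzero (cross r1 r2)).
  exists (cross r1 r2); rewrite // !dot_cross.
  by split; [rewrite -hD | |]; rewrite /det3; ring.
have [n20|/nonzeroPn z20] := boolP (nonzero (cross r2 r0)).
  exists (cross r2 r0); rewrite // !dot_cross.
  by split; [| rewrite -hD |]; rewrite /det3; ring.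
have [n0|/nonzeroPn->] := boolP (nonzero r0).
  exact: orth_of_parallel n0 (cross_eq0C z01) z20.
have [n1|/nonzeroPn->] := boolP (nonzero r1).
  have [q nq [d1 _ d2]] := orth_of_parallel n1 z01 (cross_eq0C z12).
  by exists q => //; split; rewrite ?d1 ?d2 // /dot /=; ring.
have [n2|/nonzeroPn->] := boolP (nonzero r2).
  have [q nq [d2 _ _]] := orth_of_parallel n2 (cross_eq0C z20) z12.
  by exists q => //; split; rewrite ?d2 // /dot /=; ring.
by exists e0; [rewrite /nonzero /= oner_neq0 | split; rewrite /dot /=; ring].
Qed.

Definition hessian_row a p e : vec :=
  Vec (polar a p e e0) (polar a p e e1) (polar a p e e2).

Definition hessian a p : K :=
  det3 (hessian_row a p e0) (hessian_row a p e1) (hessian_row a p e2).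

Lemma hessian_root a : exists2 p, nonzero p & hessian a p = 0.
Proof.
have [z|nz] := eqVneq (hessian a e0) 0.
  by exists e0; rewrite // /nonzero /= oner_neq0.
pose h3 := hessian a e0; pose h0 := hessian a e1.
pose P1 := hessian a (Vec 1 1 0); pose Pm := hessian a (Vec (-1) 1 0).
(* the hessian is a cubic form, determined on the line [(t, 1, 0)] by four values *)
have E t : 2 * hessian a (Vec t 1 0) = 2 * h3 * t ^+ 3 + (P1 + Pm - 2 * h0) * t ^+ 2
   + (P1 - Pm - 2 * h3) * t + 2 * h0.
  rewrite /h3 /h0 /P1 /Pm /hessian /hessian_row /det3 /polar /=; ring.
have [t ht] := @solve_monicpoly K 3 (fun i => if i == 0%N then - h0 / h3 else
   if i == 1%N then - (P1 - Pm - 2 * h3) / (2 * h3) else - (P1 + Pm - 2 * h0) / (2 * h3)) isT.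
exists (Vec t 1 0); first by rewrite /nonzero /= oner_neq0 orbT.
move: (E t); rewrite ht !big_ord_recr big_ord0 /= add0r expr0 expr1 mulr1.
rewrite (_ : 2 * h3 * _ + _ + _ + _ = 0); last by field.
by move/eqP; rewrite mulf_eq0 pnatr_eq0 /= => /eqP.
Qed.

Lemma star_basis_of_smooth a : (forall p, nonzero p -> ~ singular a p) -> star_basis a.
Proof.
move=> smooth.
have [p np hp] := hessian_root a.
have [q nq [d0 d1 d2]] := det3_eq0_kernel hp.
have hpq x : polar a p q x = 0.
  transitivity (x0 x * dot (hessian_row a p e0) q + x1 x * dot (hessian_row a p e1) q
     + x2 x * dot (hessian_row a p e2) q).
    by rewrite /dot /hessian_row /polar /=; ring.
  by rewrite d0 d1 d2; ring.
have [[w hw]|[c pE]] := det3_neq0_or_parallel p nq.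
  apply: (star_basis_of_conjugates (v1 := p) (v2 := q) (w := w)); rewrite ?hpq //.
  - by apply: (nonsingular_cases hw) => //; [rewrite polar_sym23 hpq | exact: smooth].
  - have hw' : det3 q p w != 0.
      by rewrite (_ : det3 q p w = - det3 p q w) ?oppr_eq0 // /det3; ring.
    by apply: (nonsingular_cases hw') => //; [rewrite polar_sym13 hpq | exact: smooth].
exfalso; apply: (smooth q nq) => x.
have : c * polar a q q x = 0 by rewrite -polar_scalel -pE hpq.
move/eqP; rewrite mulf_eq0 => /orP[/eqP c0|/eqP //].
by move: np; rewrite pE c0 /nonzero /vscale /= !mul0r eqxx.
Qed.

Lemma star_basis_exists a : star_basis a.
Proof.
case: (classic (exists2 p, nonzero p & singular a p)) => [[p np hp]|smooth].
  exact: star_basis_of_singular np hp.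
by apply: star_basis_of_smooth => p np hp; apply: smooth; exists p.
Qed.

End StarBasis.

Section Apolarity.
Variable K : comNzRingType.
Local Notation mpoly := {mpoly K[3]}.
Implicit Types (g h A B F G : mpoly).

Lemma diff_act_is_linear g : linear (diff_act g).
Proof.
move=> c F G; rewrite /diff_act scaler_sumr -big_split /=.
by apply: eq_bigr => m _; rewrite mderivmD mderivmZ scalerDr !scalerA mulrC.
Qed.

HB.instance Definition _ g :=
  GRing.isLinear.Build K mpoly mpoly _ (diff_act g) (diff_act_is_linear g).

Lemma diff_act_bounded k g F : (msize g <= k)%N ->
  diff_act g F = \sum_(m : 'X_{1..3 < k}) g@_m *: mderivm m F.
Proof.
move=> le_gk; rewrite /diff_act (big_mksub 'X_{1..3 < k}) ?msupp_uniq //=; last first.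
  by move=> x /msize_mdeg_lt /leq_trans; apply.
by rewrite big_rmcond //= => m /memN_msupp_eq0 ->; rewrite scale0r.
Qed.

Lemma diff_actDl g h F : diff_act (g + h) F = diff_act g F + diff_act h F.
Proof.
pose k := maxn (msize g) (msize h).
rewrite !(diff_act_bounded (k := k)) ?leq_maxl ?leq_maxr //; last first.
  exact: leq_trans (msizeD_le _ _) _.
by rewrite -big_split /=; apply: eq_bigr => m _; rewrite mcoeffD scalerDl.
Qed.

Lemma diff_actZl c g F : diff_act (c *: g) F = c *: diff_act g F.
Proof.
rewrite !(diff_act_bounded (k := msize g)) //; last exact: msizeZ_le.
by rewrite scaler_sumr; apply: eq_bigr => m _; rewrite mcoeffZ scalerA.
Qed.

Lemma diff_act_suml (I : Type) (r : seq I) (f : I -> mpoly) F :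
  diff_act (\sum_(i <- r) f i) F = \sum_(i <- r) diff_act (f i) F.
Proof.
elim: r => [|i r IHr]; last by rewrite !big_cons diff_actDl IHr.
by rewrite !big_nil /diff_act msupp0 big_nil.
Qed.

Lemma diff_actX m F : diff_act 'X_[m] F = mderivm m F.
Proof. by rewrite /diff_act msuppX big_seq1 mcoeffX eqxx scale1r. Qed.

Lemma diff_act_mulX A (j : 'I_3) F : diff_act (A * 'X_j) F = diff_act A (mderiv j F).
Proof.
rewrite {1}[A]mpolyE big_distrl /= diff_act_suml.
apply: eq_bigr => m _.
by rewrite -scalerAl -mpolyXD diff_actZl diff_actX addmC mderivmDm mderivmU1m.
Qed.

Definition o0 : 'I_3 := @Ordinal 3 0 isT.
Definition o1 : 'I_3 := @Ordinal 3 1 isT.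
Definition o2 : 'I_3 := @Ordinal 3 2 isT.

Definition linform (w : vec K) : mpoly :=
  (x0 w)%:MP * 'X_o0 + (x1 w)%:MP * 'X_o1 + (x2 w)%:MP * 'X_o2.

Lemma diff_act_mul_linform A c F :
  diff_act (A * linform c) F =
  diff_act A (x0 c *: mderiv o0 F + x1 c *: mderiv o1 F + x2 c *: mderiv o2 F).
Proof.
rewrite /linform !mulrDr !diff_actDl !linearD !linearZ /=.
by rewrite ![A * (_%:MP * _)]mulrCA !mul_mpolyC !diff_actZl !diff_act_mulX.
Qed.

Lemma mderivXU (i j : 'I_3) : mderiv i ('X_j : mpoly) = (j == i)%:R.
Proof.
rewrite mderivX mnm1E; case: eqP => [->|_]; last by rewrite scale0r.
rewrite scale1r (_ : (U_(i) - U_(i))%MM = 0%MM) ?mpolyX0 //.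
by apply/mnmP => l; rewrite mnmBE subnn mnm0E.
Qed.

Lemma mderiv_linform w :
  [/\ mderiv o0 (linform w) = (x0 w)%:MP, mderiv o1 (linform w) = (x1 w)%:MP
    & mderiv o2 (linform w) = (x2 w)%:MP].
Proof.
by split; rewrite /linform !mderivD !mderiv_mulC !mderivXU /= ?mulr0 ?mulr1 ?addr0 ?add0r.
Qed.

Lemma mderiv_linform_cube c p :
  x0 c *: mderiv o0 (linform p ^+ 3) + x1 c *: mderiv o1 (linform p ^+ 3)
    + x2 c *: mderiv o2 (linform p ^+ 3) = (3%:R * dot c p) *: linform p ^+ 2.
Proof.
have [d0 d1 d2] := mderiv_linform p.
rewrite !exprS expr0 mulr1 !mderivM d0 d1 d2 -!mul_mpolyC /dot.
ring.
Qed.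

(* [c] acts on [L_p^3] as the derivative in the direction [c], proportional to [dot c p]. *)
Lemma diff_act_linform_cube A c p : dot c p = 0 ->
  diff_act (A * linform c) (linform p ^+ 3) = 0.
Proof.
by move=> cp0; rewrite diff_act_mul_linform mderiv_linform_cube cp0 mulr0 scale0r linear0.
Qed.

Lemma diff_act_star_ideal_cube (w : 'I_4 -> vec K) g (i j : 'I_4) p :
  in_star_ideal (fun k => linform (w k)) g -> (i < j)%N ->
  dot (w i) p = 0 -> dot (w j) p = 0 -> diff_act g (linform p ^+ 3) = 0.
Proof.
move=> hg lt_ij hi hj; have [A [B ->]] := hg i j lt_ij.
by rewrite diff_actDl !diff_act_linform_cube ?addr0.
Qed.

End Apolarity.

Definition mnm3_def (i j k : nat) : 'X_{1..3} := (U_(o0) *+ i + U_(o1) *+ j + U_(o2) *+ k)%MM.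
Definition mnm3 := locked mnm3_def.

Lemma mnm3E i j k : [/\ mnm3 i j k o0 = i, mnm3 i j k o1 = j & mnm3 i j k o2 = k].
Proof. by rewrite /mnm3 -lock /mnm3_def !mnmDE !mulmnE !mnm1E /=; split; lia. Qed.

Lemma mnm3_eta (m : 'X_{1..3}) : m = mnm3 (m o0) (m o1) (m o2).
Proof.
have [e0 e1 e2] := mnm3E (m o0) (m o1) (m o2).
apply/mnmP => -[[|[|[|l]]] hl] //.
- by rewrite (_ : Ordinal hl = o0) ?e0 //; apply: val_inj.
- by rewrite (_ : Ordinal hl = o1) ?e1 //; apply: val_inj.
- by rewrite (_ : Ordinal hl = o2) ?e2 //; apply: val_inj.
Qed.

Lemma eq_mnm3 i j k i' j' k' :
  (mnm3 i j k == mnm3 i' j' k') = [&& i == i', j == j' & k == k'].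
Proof.
have [a0 a1 a2] := mnm3E i j k; have [b0 b1 b2] := mnm3E i' j' k'.
apply/eqP/and3P => [e|[/eqP-> /eqP-> /eqP->] //].
have := congr1 (fun m : 'X_{1..3} => (m o0, m o1, m o2)) e.
by rewrite /= a0 a1 a2 b0 b1 b2 => -[-> -> ->]; rewrite !eqxx.
Qed.

Lemma mdeg_mnm3 i j k : mdeg (mnm3 i j k) = (i + j + k)%N.
Proof. by rewrite /mnm3 -lock /mnm3_def !mdegD !mdegMn !mdeg1 !mul1n. Qed.

Lemma mpolyX_mnm3 (R : nzRingType) i j k :
  'X_[mnm3 i j k] = 'X_o0 ^+ i * 'X_o1 ^+ j * 'X_o2 ^+ k :> {mpoly R[3]}.
Proof. by rewrite /mnm3 -lock /mnm3_def !mpolyXD !mpolyXn. Qed.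

Definition cubic_monomials : seq 'X_{1..3} :=
  [:: mnm3 3 0 0; mnm3 2 1 0; mnm3 2 0 1; mnm3 1 2 0; mnm3 1 1 1; mnm3 1 0 2;
      mnm3 0 3 0; mnm3 0 2 1; mnm3 0 1 2; mnm3 0 0 3].

Lemma uniq_cubic_monomials : uniq cubic_monomials.
Proof. by rewrite /cubic_monomials /= !inE !eq_mnm3. Qed.

Lemma mem_cubic_monomials m : mdeg m = 3%N -> m \in cubic_monomials.
Proof.
rewrite [m]mnm3_eta mdeg_mnm3; move: (m o0) (m o1) (m o2) => i j k hs.
have [hi hj hk] : [/\ (i <= 3)%N, (j <= 3)%N & (k <= 3)%N] by split; lia.
move: hs hi hj hk.
case: i => [|[|[|[|i]]]]; case: j => [|[|[|[|j]]]]; case: k => [|[|[|[|k]]]] => hs hi hj hk;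
  try lia.
all: by rewrite /cubic_monomials !inE !eq_mnm3.
Qed.

Lemma dhomog3E (R : nzRingType) (F : {mpoly R[3]}) : F \is 3.-homog ->
  F = \sum_(m <- cubic_monomials) F@_m *: 'X_[m].
Proof.
move=> hF; rewrite {1}[F]mpolyE.
rewrite [RHS](bigID (fun m => m \in msupp F)) /=.
rewrite [X in _ = _ + X]big1 ?addr0; last first.
  by move=> m /memN_msupp_eq0 ->; rewrite scale0r.
rewrite -[RHS]big_filter; apply: perm_big.
apply: uniq_perm; first exact: msupp_uniq.
  by rewrite filter_uniq // uniq_cubic_monomials.
move=> m; rewrite mem_filter; case: (boolP (m \in msupp F)) => //= hm.
by apply/esym/mem_cubic_monomials; apply: (dhomog_mf hF).
Qed.

Section CubicPoly.
Variable K : numFieldType.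
Local Notation mpoly := {mpoly K[3]}.

Definition lift_vec (u : vec K) : vec mpoly := Vec (x0 u)%:MP (x1 u)%:MP (x2 u)%:MP.

Definition lift_cubic (a : cubic K) : cubic mpoly :=
  Cubic (c000 a)%:MP (c001 a)%:MP (c002 a)%:MP (c011 a)%:MP (c012 a)%:MP
      (c022 a)%:MP (c111 a)%:MP (c112 a)%:MP (c122 a)%:MP (c222 a)%:MP.

Definition var_vec : vec mpoly := Vec 'X_o0 'X_o1 'X_o2.

Definition cubic_poly (a : cubic K) : mpoly :=
  polar (lift_cubic a) var_vec var_vec var_vec.

(* A monomial [x_i x_j x_k] arises from 3 or 6 terms of [polar a x x x] when two or three
   of the indices are distinct. *)
Definition cubic_of_poly (F : mpoly) : cubic K :=
  Cubic (F@_(mnm3 3 0 0)) (F@_(mnm3 2 1 0) / 3%:R) (F@_(mnm3 2 0 1) / 3%:R)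
      (F@_(mnm3 1 2 0) / 3%:R) (F@_(mnm3 1 1 1) / 6%:R) (F@_(mnm3 1 0 2) / 3%:R)
      (F@_(mnm3 0 3 0)) (F@_(mnm3 0 2 1) / 3%:R) (F@_(mnm3 0 1 2) / 3%:R) (F@_(mnm3 0 0 3)).

Lemma cubic_of_polyK (F : mpoly) : F \is 3.-homog -> cubic_poly (cubic_of_poly F) = F.
Proof.
move=> hF; rewrite [RHS](dhomog3E hF) /cubic_monomials !big_cons big_nil !mpolyX_mnm3.
set a := cubic_of_poly F.
have h3 : (3%:R : K) != 0 by rewrite pnatr_eq0.
have h6 : (6%:R : K) != 0 by rewrite pnatr_eq0.
have -> : F@_(mnm3 3 0 0) = c000 a by [].
have -> : F@_(mnm3 2 1 0) = 3%:R * c001 a by rewrite /a /=; field.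
have -> : F@_(mnm3 2 0 1) = 3%:R * c002 a by rewrite /a /=; field.
have -> : F@_(mnm3 1 2 0) = 3%:R * c011 a by rewrite /a /=; field.
have -> : F@_(mnm3 1 1 1) = 6%:R * c012 a by rewrite /a /=; field.
have -> : F@_(mnm3 1 0 2) = 3%:R * c022 a by rewrite /a /=; field.
have -> : F@_(mnm3 0 3 0) = c111 a by [].
have -> : F@_(mnm3 0 2 1) = 3%:R * c112 a by rewrite /a /=; field.
have -> : F@_(mnm3 0 1 2) = 3%:R * c122 a by rewrite /a /=; field.
have -> : F@_(mnm3 0 0 3) = c222 a by [].
clearbody a; rewrite -!mul_mpolyC /cubic_poly /polar /=; ring.
Qed.

Lemma polar_lift a u v w :
  polar (lift_cubic a) (lift_vec u) (lift_vec v) (lift_vec w) = (polar a u v w)%:MP.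
Proof. rewrite /polar /=; ring. Qed.

Lemma det3_lift u v w : det3 (lift_vec u) (lift_vec v) (lift_vec w) = (det3 u v w)%:MP.
Proof. rewrite /det3 /=; ring. Qed.

Lemma cross_lift u v : cross (lift_vec u) (lift_vec v) = lift_vec (cross u v).
Proof. rewrite /cross /lift_vec /=; congr Vec; ring. Qed.

Lemma dot_lift_var w : dot (lift_vec w) var_vec = linform w.
Proof. by []. Qed.

End CubicPoly.

Arguments var_vec {K}.

Section StarConfiguration.
Variable K : numFieldType.
Local Notation mpoly := {mpoly K[3]}.
Implicit Types (u v w p q r : vec K) (a : cubic K).

Definition vsub u v : vec K := Vec (x0 u - x0 v) (x1 u - x1 v) (x2 u - x2 v).

Definition star_lines v1 v2 v3 (k : 'I_4) : vec K :=
  nth v1 [:: v1; v2; v3; lincomb3 1 1 1 v1 v2 v3] k.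

Lemma lincomb3_eq0 c1 c2 c3 p q r : det3 p q r != 0 ->
  lincomb3 c1 c2 c3 p q r = Vec 0 0 0 -> [/\ c1 = 0, c2 = 0 & c3 = 0].
Proof.
move=> hD hc; have [] := dot_lincomb3_cross c1 c2 c3 p q r.
have dot0 s : dot (Vec 0 0 0) s = 0 by rewrite /dot /= !mul0r !addr0.
rewrite hc !dot0 => /esym/eqP h1 /esym/eqP h2 /esym/eqP h3.
by move: h1 h2 h3; rewrite !mulf_eq0 (negbTE hD) !orbF => /eqP-> /eqP-> /eqP->.
Qed.

Lemma det3_star_lines v1 v2 v3 (i j k : 'I_4) : det3 v1 v2 v3 != 0 ->
  i != j -> i != k -> j != k ->
  det3 (star_lines v1 v2 v3 i) (star_lines v1 v2 v3 j) (star_lines v1 v2 v3 k) != 0.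
Proof.
move=> hD.
case: i => [[|[|[|[|?]]]] ?] //; case: j => [[|[|[|[|?]]]] ?] //;
  case: k => [[|[|[|[|?]]]] ?] //= _ _ _.
all: first
  [ rewrite (_ : det3 _ _ _ = det3 v1 v2 v3) //; rewrite /det3 /lincomb3 /=; ring
  | rewrite (_ : det3 _ _ _ = - det3 v1 v2 v3) ?oppr_eq0 //;
    rewrite /det3 /lincomb3 /=; ring ].
Qed.

Lemma linform_lincomb3 c1 c2 c3 p q r :
  c1 *: linform p + c2 *: linform q + c3 *: linform r = linform (lincomb3 c1 c2 c3 p q r).
Proof. rewrite /linform -!mul_mpolyC /= !rmorphD !rmorphM /=; ring. Qed.

Lemma linform_eq0 w : linform w = 0 -> w = Vec 0 0 0.
Proof.
move=> w0; case: w w0 => w0 w1 w2 /(congr1 (fun P : mpoly => (P@_U_(o0), P@_U_(o1), P@_U_(o2)))).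
rewrite /linform !mcoeffD !mcoeffCM !mcoeffXU !mcoeff0 /=.
by rewrite !mulr0 !mulr1 !addr0 !add0r => -[-> -> ->].
Qed.

Lemma linform_homog w : linform w \is 1.-homog.
Proof.
by rewrite /linform !mul_mpolyC !rpredD // dhomogZ // dhomogX; apply/eqP; exact: mdeg1.
Qed.

Lemma any3_lin_indep_star_lines v1 v2 v3 : det3 v1 v2 v3 != 0 ->
  any3_lin_indep (fun k => linform (star_lines v1 v2 v3 k)).
Proof.
move=> hD i j k hij hik hjk c1 c2 c3; rewrite linform_lincomb3 => /linform_eq0.
exact: lincomb3_eq0 (det3_star_lines hD hij hik hjk).
Qed.

Lemma linform_vsub u v : linform u - linform v = linform (vsub u v).
Proof. rewrite /linform /= !rmorphB; ring. Qed.

Lemma cubic_poly_star_expansion a v1 v2 v3 :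
  polar a v1 v2 v3 = 0 -> polar a v1 v1 v2 + polar a v1 v2 v2 = 0 ->
  polar a v1 v1 v3 + polar a v1 v3 v3 = 0 -> polar a v2 v2 v3 + polar a v2 v3 v3 = 0 ->
  det3 v1 v2 v3 ^+ 3 *: cubic_poly a =
    (polar a v1 v1 v1 + polar a v1 v1 v2 + polar a v1 v1 v3) *: linform (cross v2 v3) ^+ 3
  + (polar a v2 v2 v2 - polar a v1 v1 v2 + polar a v2 v2 v3) *: linform (cross v3 v1) ^+ 3
  + (polar a v3 v3 v3 - polar a v1 v1 v3 - polar a v2 v2 v3) *: linform (cross v1 v2) ^+ 3
  - polar a v1 v1 v2 *: linform (vsub (cross v2 v3) (cross v3 v1)) ^+ 3
  - polar a v1 v1 v3 *: linform (vsub (cross v2 v3) (cross v1 v2)) ^+ 3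
  - polar a v2 v2 v3 *: linform (vsub (cross v3 v1) (cross v1 v2)) ^+ 3.
Proof.
move=> E0 E1 E2 E3.
have := polar_star_expansion (lift_cubic a) (lift_vec v1) (lift_vec v2) (lift_vec v3) var_vec.
rewrite /= !cross_lift !dot_lift_var !polar_lift det3_lift -/(cubic_poly a) !linform_vsub.
rewrite -!rmorphN -!rmorphD E0 E1 E2 E3 !raddf0 !mulr0 !mul0r !addr0.
by rewrite -rmorphXn !mul_mpolyC.
Qed.

Lemma star_apolar_of_star_basis a v1 v2 v3 : det3 v1 v2 v3 != 0 ->
  polar a v1 v2 v3 = 0 -> polar a v1 v1 v2 + polar a v1 v2 v2 = 0 ->
  polar a v1 v1 v3 + polar a v1 v3 v3 = 0 -> polar a v2 v2 v3 + polar a v2 v3 v3 = 0 ->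
  star_apolar (fun k => linform (star_lines v1 v2 v3 k)) (cubic_poly a).
Proof.
move=> hD E0 E1 E2 E3 g hg; rewrite inE; apply/eqP.
have vertex_cube i j p (lt_ij : (i < j)%N) (lt_j4 : (j < 4)%N) :
    dot (star_lines v1 v2 v3 (Ordinal (ltn_trans lt_ij lt_j4))) p = 0 ->
    dot (star_lines v1 v2 v3 (Ordinal lt_j4)) p = 0 -> diff_act g (linform p ^+ 3) = 0.
  exact: diff_act_star_ideal_cube hg _.
have := congr1 (diff_act g) (cubic_poly_star_expansion E0 E1 E2 E3).
rewrite linearZ /=; set P := diff_act g (cubic_poly a).
rewrite !linearD !linearN !linearZ /=.
rewrite (@vertex_cube 1 2 (cross v2 v3)) 1?(@vertex_cube 0 2 (cross v3 v1))
  1?(@vertex_cube 0 1 (cross v1 v2)) 1?(@vertex_cube 2 3 (vsub (cross v2 v3) (cross v3 v1)))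
  1?(@vertex_cube 1 3 (vsub (cross v2 v3) (cross v1 v2)))
  1?(@vertex_cube 0 3 (vsub (cross v3 v1) (cross v1 v2))) //;
  try by rewrite /star_lines /dot /cross /vsub /lincomb3 /=; ring.
rewrite !oppr0 !scaler0 !addr0 => /eqP.
by rewrite scaler_eq0 expf_eq0 /= (negbTE hD) => /eqP.
Qed.

End StarConfiguration.

Theorem cubic_has_apolar_star_configuration (K : numClosedFieldType) (F : {mpoly K[3]}) :
  F \is 3.-homog ->
  exists l : 'I_4 -> {mpoly K[3]},
    [/\ forall k, l k \is 1.-homog, any3_lin_indep l & star_apolar l F].
Proof.
move=> hF; have [v1 [v2 [v3 [hD E0 E1 E2 E3]]]] := star_basis_exists (cubic_of_poly F).
exists (fun k => linform (star_lines v1 v2 v3 k)); split.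
- by move=> k; apply: linform_homog.
- exact: any3_lin_indep_star_lines.
- by rewrite -(cubic_of_polyK hF); apply: star_apolar_of_star_basis.
Qed.

Unset Implicit Arguments.

Theorem theorem4p5 (R : realType) (F : {mpoly R[i][3]}) :
  F \is 3.-homog ->
  exists l : 'I_4 -> {mpoly R[i][3]},
    [/\ forall k, l k \is 1.-homog,
        any3_lin_indep l
      & star_apolar l F].
Proof. exact: cubic_has_apolar_star_configuration. Qed.
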